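(* Let $n\ge 3$, let $a>0$ be a constant, and let $f$ be continuous on $(0,\infty)$ with $\lim_{t\to\infty}f(t)=0$. Let $y$ be a solution of \[ y''+\frac{n-1}{t}y'+\frac{a+f(t)}{t^2}y=0 \] that is bounded on some interval $(t_0,\infty)$. Then $\lim_{t\to\infty}y(t)=0$. *)

From Stdlib Require Export Reals.
Open Scope R_scope.

Definition is_solution_on (t1 : R) (n : nat) (a : R) (f y dy d2y : R -> R) : Prop :=
  forall t, t1 < t ->
    derivable_pt_lim y t (dy t) /\
    derivable_pt_lim dy t (d2y t) /\
    d2y t + (INR n - 1) / t * dy t + (a + f t) / (t ^ 2) * y t = 0.

(* With z = t y' + lam y, the equation makes the energy V = z^2 + beta y^2
   (beta = a - lam c + lam^2, c = n - 2) satisfy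
   t V' = -2 (c - lam) z^2 - 2 beta lam y^2 - 2 f y z.
   For a small lam > 0 and t so large that f is small, this gives
   t V' <= -lam V.  Hence V + lam e ln t would be nonincreasing as long as
   V >= e, which is impossible since ln t grows without bound; so V eventually
   drops below any e > 0 and then stays there, forcing y -> 0. *)

From Stdlib Require Import Reals Lra Classical.
Open Scope R_scope.

Lemma nonincreasing_of_derivative_nonpos (g dg : R -> R) (T : R) :
  (forall t, T < t -> derivable_pt_lim g t (dg t)) ->
  (forall t, T < t -> dg t <= 0) ->
  forall s t, T < s -> s <= t -> g t <= g s.
Proof.
  intros Dg dg_nonpos s t Ts [st | ->]; [| lra].
  destruct (MVT_cor2 g dg s t st) as [u [Hmvt Hu]].
  - intros u Hu; apply Dg; lra.
  - assert (dg u <= 0) by (apply dg_nonpos; lra).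
    nra.
Qed.

Section LogarithmicDecay.

Variables (V dV : R -> R) (T lam : R).
Hypotheses (T_pos : 0 < T) (lam_pos : 0 < lam).
Hypothesis V_derivable : forall t, T < t -> derivable_pt_lim V t (dV t).
Hypothesis V_nonneg : forall t, T < t -> 0 <= V t.
Hypothesis V_dissipative : forall t, T < t -> t * dV t <= - lam * V t.

Lemma dV_nonpos t : T < t -> dV t <= 0.
Proof.
  intros Tt.
  assert (V_t := V_nonneg t Tt); assert (dV_t := V_dissipative t Tt).
  destruct (Rle_dec (dV t) 0); [assumption | nra].
Qed.

Lemma V_nonincreasing s t : T < s -> s <= t -> V t <= V s.
Proof. exact (nonincreasing_of_derivative_nonpos V dV T V_derivable dV_nonpos s t). Qed.

Lemma V_eventually_lt e : 0 < e -> exists t, T < t /\ V t < e.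
Proof.
  intros e_pos; apply NNPP; intros never_below.
  assert (V_ge : forall t, T < t -> e <= V t).
  { intros t Tt; apply Rnot_lt_le; intros Vt.
    exact (not_ex_all_not _ _ never_below t (conj Tt Vt)). }
  set (W := fun t => V t + lam * e * ln t).
  set (dW := fun t => dV t + lam * e * / t).
  assert (W_nonincreasing : forall s t, T < s -> s <= t -> W t <= W s).
  { apply (nonincreasing_of_derivative_nonpos W dW T).
    - intros t Tt; unfold W, dW.
      apply derivable_pt_lim_plus; [now apply V_derivable |].
      apply (derivable_pt_lim_scal ln (lam * e)), derivable_pt_lim_ln; lra.
    - intros t Tt; unfold dW.
      assert (V_t := V_ge t Tt); assert (dV_t := V_dissipative t Tt).
      assert (t * (dV t + lam * e * / t) <= 0).
      { rewrite Rmult_plus_distr_l.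
        replace (t * (lam * e * / t)) with (lam * e) by (field; lra); nra. }
      destruct (Rle_dec (dV t + lam * e * / t) 0); [assumption | nra]. }
  set (p := T + 1).
  (* [q] is chosen so that [lam e (ln q - ln p) = V p + lam e] *)
  set (q := exp (ln p + V p / (lam * e) + 1)).
  assert (p_pos : 0 < p) by (unfold p; lra).
  assert (Vp_nonneg : 0 <= V p / (lam * e)).
  { apply Rmult_le_pos; [apply V_nonneg; unfold p; lra |].
    apply Rlt_le, Rinv_0_lt_compat; nra. }
  assert (p_lt_q : p < q).
  { unfold q; rewrite <- (exp_ln p) at 1 by exact p_pos.
    apply exp_increasing; lra. }
  assert (Wqp := W_nonincreasing p q ltac:(unfold p; lra) (Rlt_le _ _ p_lt_q)).
  unfold W in Wqp; unfold q in Wqp at 2; rewrite ln_exp in Wqp.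
  assert (lam * e * (V p / (lam * e)) = V p) by (field; lra).
  assert (V_q := V_ge q ltac:(unfold p in p_lt_q; lra)).
  nra.
Qed.

Lemma V_tends_to_0 e : 0 < e -> exists M, forall t, M < t -> V t < e.
Proof.
  intros e_pos; destruct (V_eventually_lt e e_pos) as [s [Ts Vs]].
  exists s; intros t st.
  assert (V t <= V s) by (apply V_nonincreasing; lra); lra.
Qed.

End LogarithmicDecay.

Definition energy (lam beta : R) (y dy : R -> R) (t : R) : R :=
  (t * dy t + lam * y t)² + beta * (y t)².

Lemma energy_derivative (lam beta : R) (y dy : R -> R) (t d2y_t : R) :
  derivable_pt_lim y t (dy t) -> derivable_pt_lim dy t d2y_t ->
  derivable_pt_lim (energy lam beta y dy) t
    (2 * (t * dy t + lam * y t) * (dy t + t * d2y_t + lam * dy t)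
     + 2 * beta * y t * dy t).
Proof.
  intros Dy Ddy.
  assert (Dz : derivable_pt_lim (fun s => s * dy s + lam * y s) t
                 (dy t + t * d2y_t + lam * dy t)).
  { replace (dy t + t * d2y_t + lam * dy t)
      with ((1 * dy t + t * d2y_t) + lam * dy t) by ring.
    apply derivable_pt_lim_plus.
    - apply (derivable_pt_lim_mult id dy); [apply derivable_pt_lim_id | exact Ddy].
    - exact (derivable_pt_lim_scal y lam t _ Dy). }
  unfold energy, Rsqr.
  replace (2 * (t * dy t + lam * y t) * (dy t + t * d2y_t + lam * dy t)
           + 2 * beta * y t * dy t)
    with (((dy t + t * d2y_t + lam * dy t) * (t * dy t + lam * y t)
           + (t * dy t + lam * y t) * (dy t + t * d2y_t + lam * dy t))
          + beta * (dy t * y t + y t * dy t)) by ring.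
  apply derivable_pt_lim_plus.
  - exact (derivable_pt_lim_mult _ _ t _ _ Dz Dz).
  - apply (derivable_pt_lim_scal (fun s => y s * y s)).
    exact (derivable_pt_lim_mult _ _ t _ _ Dy Dy).
Qed.

(* The choice of [beta] is exactly what cancels the [y z] term coming from [a]. *)
Lemma energy_dissipation_identity (c a lam t Y D D2 F : R) :
  t ^ 2 * D2 + (c + 1) * t * D + (a + F) * Y = 0 ->
  t * (2 * (t * D + lam * Y) * (D + t * D2 + lam * D)
       + 2 * (a - lam * c + lam ^ 2) * Y * D)
  = - 2 * (c - lam) * (t * D + lam * Y)² - 2 * (a - lam * c + lam ^ 2) * lam * Y²
    - 2 * F * Y * (t * D + lam * Y).
Proof.
  intros Heq; unfold Rsqr.
  transitivity (- 2 * (c - lam) * ((t * D + lam * Y) * (t * D + lam * Y))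
                - 2 * (a - lam * c + lam ^ 2) * lam * (Y * Y)
                - 2 * F * Y * (t * D + lam * Y)
                + 2 * (t * D + lam * Y) * (t ^ 2 * D2 + (c + 1) * t * D + (a + F) * Y));
    [ring | rewrite Heq; ring].
Qed.

Lemma cross_term_le_Rabs (F Y Z : R) : - 2 * F * Y * Z <= Rabs F * (Y² + Z²).
Proof.
  unfold Rsqr.
  assert (0 <= (Y + Z) * (Y + Z)) by apply Rle_0_sqr.
  assert (0 <= (Y - Z) * (Y - Z)) by apply Rle_0_sqr.
  unfold Rabs; destruct (Rcase_abs F).
  - assert (0 <= - F * ((Y - Z) * (Y - Z))) by (apply Rmult_le_pos; lra); nra.
  - assert (0 <= F * ((Y + Z) * (Y + Z))) by (apply Rmult_le_pos; lra); nra.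
Qed.

Lemma dissipation_bound (c lam beta F Y Z : R) :
  0 < lam -> 2 * lam <= c -> 0 < beta ->
  Rabs F <= lam -> Rabs F <= lam * beta ->
  - 2 * (c - lam) * Z² - 2 * beta * lam * Y² - 2 * F * Y * Z
  <= - lam * (Z² + beta * Y²).
Proof.
  intros lam_pos lam_le beta_pos F_le_lam F_le_lam_beta.
  assert (cross := cross_term_le_Rabs F Y Z).
  assert (Y2 := Rle_0_sqr Y); assert (Z2 := Rle_0_sqr Z).
  assert (Rabs F * Z² <= lam * Z²) by (apply Rmult_le_compat_r; lra).
  assert (Rabs F * Y² <= lam * beta * Y²) by (apply Rmult_le_compat_r; lra).
  nra.
Qed.

(* [lam <= c/2] and [lam c <= a/2] force [beta >= a/2]. *)
Lemma energy_parameters_exist (c a : R) :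
  0 < c -> 0 < a ->
  exists lam, 0 < lam /\ 2 * lam <= c /\ 0 < a - lam * c + lam ^ 2.
Proof.
  intros c_pos a_pos.
  exists (a * c / (2 * (a + c ^ 2))).
  assert (den_pos : 0 < 2 * (a + c ^ 2)) by nra.
  assert (lam_c : a * c / (2 * (a + c ^ 2)) * c <= a / 2).
  { apply (Rmult_le_reg_r (2 * (a + c ^ 2))); [exact den_pos |].
    field_simplify; [nra | lra]. }
  repeat split.
  - apply Rdiv_lt_0_compat; nra.
  - apply (Rmult_le_reg_r (2 * (a + c ^ 2))); [exact den_pos |].
    field_simplify; [nra | lra].
  - nra.
Qed.

Lemma Rabs_lt_of_energy_lt (lam beta eps : R) (y dy : R -> R) (t : R) :
  0 < beta -> 0 < eps -> energy lam beta y dy t < beta * eps² -> Rabs (y t) < eps.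
Proof.
  intros beta_pos eps_pos E_lt; unfold energy in E_lt.
  assert (0 <= (t * dy t + lam * y t)²) by apply Rle_0_sqr.
  assert ((y t)² < eps²) by nra.
  rewrite <- (Rabs_pos_eq eps) by lra.
  now apply Rsqr_lt_abs_0.
Qed.

Lemma euler_solution_tends_to_0 (c a T : R) (f y dy d2y : R -> R) :
  0 < c -> 0 < a ->
  (forall eps, 0 < eps -> exists M, forall t, M < t -> Rabs (f t) < eps) ->
  (forall t, T < t ->
     derivable_pt_lim y t (dy t) /\ derivable_pt_lim dy t (d2y t) /\
     t ^ 2 * d2y t + (c + 1) * t * dy t + (a + f t) * y t = 0) ->
  forall eps, 0 < eps -> exists M, forall t, M < t -> Rabs (y t) < eps.
Proof.
  intros c_pos a_pos f_to_0 Hsol eps eps_pos.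
  destruct (energy_parameters_exist c a c_pos a_pos) as [lam [lam_pos [lam_le beta_pos]]].
  set (beta := a - lam * c + lam ^ 2) in beta_pos.
  set (eta := Rmin lam (lam * beta)).
  destruct (f_to_0 eta ltac:(apply Rmin_glb_lt; nra)) as [Mf f_small].
  set (T0 := Rmax 1 (Rmax T Mf)).
  assert (T0_ge : 1 <= T0 /\ T <= T0 /\ Mf <= T0).
  { unfold T0; generalize (Rmax_l 1 (Rmax T Mf)) (Rmax_r 1 (Rmax T Mf))
      (Rmax_l T Mf) (Rmax_r T Mf); lra. }
  set (dE := fun t => 2 * (t * dy t + lam * y t) * (dy t + t * d2y t + lam * dy t)
                      + 2 * beta * y t * dy t).
  destruct (V_tends_to_0 (energy lam beta y dy) dE T0 lam
              ltac:(lra) lam_pos) with (e := beta * eps²) as [M HM].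
  - intros t Tt; destruct (Hsol t ltac:(lra)) as [Dy [Ddy _]].
    exact (energy_derivative lam beta y dy t (d2y t) Dy Ddy).
  - intros t _; unfold energy.
    apply Rplus_le_le_0_compat; [apply Rle_0_sqr |].
    apply Rmult_le_pos; [lra | apply Rle_0_sqr].
  - intros t Tt; destruct (Hsol t ltac:(lra)) as [_ [_ Heq]].
    assert (f_t : Rabs (f t) < eta) by (apply f_small; lra).
    unfold dE, beta, energy.
    rewrite (energy_dissipation_identity c a lam t (y t) (dy t) (d2y t) (f t) Heq).
    fold beta; apply dissipation_bound; try assumption;
      generalize (Rmin_l lam (lam * beta)) (Rmin_r lam (lam * beta)); fold eta; lra.
  - assert (0 < eps²) by (unfold Rsqr; nra); nra.
  - exists M; intros t Mt.
    exact (Rabs_lt_of_energy_lt lam beta eps y dy t beta_pos eps_pos (HM t Mt)).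
Qed.

Lemma is_solution_on_euler_form (t1 : R) (n : nat) (a : R) (f y dy d2y : R -> R) t :
  0 <= t1 -> is_solution_on t1 n a f y dy d2y -> t1 < t ->
  t ^ 2 * d2y t + ((INR n - 2) + 1) * t * dy t + (a + f t) * y t = 0.
Proof.
  intros t1_nonneg Hsol t1t; destruct (Hsol t t1t) as [_ [_ Heq]].
  assert (t_pos : 0 < t) by lra.
  replace (t ^ 2 * d2y t + ((INR n - 2) + 1) * t * dy t + (a + f t) * y t)
    with (t ^ 2 * (d2y t + (INR n - 1) / t * dy t + (a + f t) / t ^ 2 * y t))
    by (field; lra).
  rewrite Heq; ring.
Qed.

Theorem lemma3p4 (n : nat) (a t1 : R) (f y dy d2y : R -> R) :
  (3 <= n)%nat ->
  0 < a ->
  (forall t, 0 < t -> continuity_pt f t) ->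
  (forall eps, 0 < eps -> exists M, forall t, M < t -> Rabs (f t) < eps) ->
  0 <= t1 ->
  is_solution_on t1 n a f y dy d2y ->
  (exists t0 B, t1 <= t0 /\ forall t, t0 < t -> Rabs (y t) <= B) ->
  forall eps, 0 < eps -> exists M, forall t, M < t -> Rabs (y t) < eps.
Proof.
  intros n_ge3 a_pos _ f_to_0 t1_nonneg Hsol _.
  assert (c_pos : 0 < INR n - 2) by (apply le_INR in n_ge3; simpl in n_ge3; lra).
  apply (euler_solution_tends_to_0 (INR n - 2) a t1 f y dy d2y c_pos a_pos f_to_0).
  intros t t1t; destruct (Hsol t t1t) as [Dy [Ddy _]].
  repeat split; [exact Dy | exact Ddy |].
  exact (is_solution_on_euler_form t1 n a f y dy d2y t t1_nonneg Hsol t1t).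
Qed.
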